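(* Let $D$ be a tangle diagram with an admissible decorated shadow $\mathrm{SL}_2(\mathbb{C})$-coloring $i\mapsto(g_i,L_i)$, $j\mapsto u_j$. Then the associated coloring $i\mapsto\chi_i=(a_i,b_i,m_i)$ is an octahedral coloring of $D$. That is, it satisfies the following conditions at every crossing. At every crossing, $m_{1'}=m_1$ and $m_{2'}=m_2$. At every positive crossing, with $A=1-\frac{m_1b_1}{b_2}\big(1-\frac{a_1}{m_1}\big)\big(1-\frac{1}{m_2a_2}\big)$, \[ a_{1'}=a_1A^{-1},\quad a_{2'}=a_2A,\quad b_{1'}=\frac{m_2b_2}{m_1}\Big(1-m_2a_2\big(1-\tfrac{b_2}{m_1b_1}\big)\Big)^{-1},\quad b_{2'}=b_1\Big(1-\frac{m_1}{a_1}\big(1-\tfrac{b_2}{m_1b_1}\big)\Big). \] At every negative crossing, with $\tilde A=1-\frac{b_2}{m_1b_1}(1-m_1a_1)\big(1-\frac{m_2}{a_2}\big)$, \[ a_{1'}=a_1\tilde A^{-1},\quad a_{2'}=a_2\tilde A,\quad b_{1'}=\frac{m_2b_2}{m_1}\Big(1-\frac{a_2}{m_2}\big(1-\tfrac{m_1b_1}{b_2}\big)\Big),\quad b_{2'}=b_1\Big(1-\frac{1}{m_1a_1}\big(1-\tfrac{m_1b_1}{b_2}\big)\Big)^{-1}. \]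
   Context: Tangle diagrams: a tangle diagram $D$ is an oriented tangle diagram in $[0,1]^2$, viewed as a 4-valent graph with crossings. Segments are the edges of the graph; a strand is cut at every crossing, over or under. Regions are the components of the complement of the graph in the square. Above and below: for a segment $i$, $i^{\uparrow}$ is the region on the left of $i$ with respect to its orientation and $i^{\downarrow}$ the region on its right. Crossing labels: rotate a crossing so both strands point right. The incoming segments are $1$ (upper left) and $2$ (lower left). The outgoing segments are $1'$ (lower right, continuing $1$) and $2'$ (upper right, continuing $2$). The crossing is positive if strand $1\to1'$ is over, negative if strand $2\to2'$ is over. Decorated $\mathrm{SL}_2(\mathbb{C})$-coloring: assign to each segment $i$ a matrix $g_i\in\mathrm{SL}_2(\mathbb{C})$ and a line $L_i\subset\mathbb{C}^2$ of row vectors with $L_ig_i=L_i$, such that: - at positive crossings, $g_{1'}=g_1$, $g_{2'}=g_1^{-1}g_2g_1$, $L_{1'}=L_1$ and $L_{2'}=L_2g_1$; - at negative crossings, $g_{2'}=g_2$, $g_{1'}=g_2g_1g_2^{-1}$, $L_{2'}=L_2$ and $L_{1'}=L_1g_2^{-1}$. Shadow coloring: nonzero column vectors $u_j\in\mathbb{C}^2$ for regions, with $u_{i^{\downarrow}}=g_iu_{i^{\uparrow}}$ for every segment $i$. Admissibility: write $e_2=(0,1)^T$ and $\det(x,y)$ for the determinant of the matrix with columns $x,y$. For each segment choose nonzero $v_i\in L_i$ and define $m_i$ by $v_ig_i=m_i^{-1}v_i$. The coloring is admissible if $\det(u_j,e_2)\ne0$ for all regions $j$ and $v_ie_2\ne0$,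 $v_iu_{i^{\uparrow}}\neq 0$ for all segments $i$. Associated coloring: $\chi_i=\big(\det(u_{i^{\downarrow}},e_2)/\det(u_{i^{\uparrow}},e_2),\ -v_ie_2/(v_iu_{i^{\uparrow}}),\ m_i\big)$. Octahedral coloring: an assignment of a triple $(a_i,b_i,m_i)$ of nonzero complex numbers to each segment satisfying the displayed relations at each crossing. *)

(* C is modelled as R[i] for an arbitrary R : realType
   (every realType is isomorphic to the real numbers). *)
From HB Require Import structures.
From mathcomp Require Import all_boot all_order all_algebra.
From mathcomp Require Import reals complex.
Set Implicit Arguments. Unset Strict Implicit. Unset Printing Implicit Defensive.
Import Order.TTheory GRing.Theory Num.Theory.
Local Open Scope ring_scope.

(* Combinatorial (local) data of an oriented tangle diagram.
   - seg : segments (edges of the 4-valent graph), reg : regions,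
     crs : crossings.
   - up i  = i^(up)   : the region on the left of segment i,
     down i = i^(down) : the region on the right of segment i.
   - at a crossing x (rotated so both strands point right):
     in1 x = 1 (upper left), in2 x = 2 (lower left),
     out1 x = 1' (lower right, continuing 1), out2 x = 2' (upper right,
     continuing 2); pos x = true iff the crossing is positive
     (strand 1 -> 1' is over).
   - the four regions around a crossing are glued as forced by the picture:
     top = 1^up = 2'^up, left = 1^down = 2^up, bottom = 2^down = 1'^down,
     right = 1'^up = 2'^down. *)
Record tangle_diagram := TangleDiagram {
  seg : finType;
  reg : finType;
  crs : finType;
  up : seg -> reg;
  down : seg -> reg;
  pos : crs -> bool;
  in1 : crs -> seg;
  in2 : crs -> seg;
  out1 : crs -> seg;
  out2 : crs -> seg;
  reg_top : forall x, up (in1 x) = up (out2 x);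
  reg_left : forall x, down (in1 x) = up (in2 x);
  reg_bottom : forall x, down (in2 x) = down (out1 x);
  reg_right : forall x, up (out1 x) = down (out2 x)
}.

Section Colorings.
Variable R : realType.
Local Notation C := R[i].
Variable D : tangle_diagram.

Definition e2 : 'cV[C]_2 := delta_mx ord_max ord0.

Definition det2 (x y : 'cV[C]_2) : C := \det (row_mx x y : 'M[C]_2).

(* Decorated SL_2(C)-coloring: g i in SL_2(C), L i a line of row vectors
   (represented as the row space of a square matrix of rank 1) with
   L_i g_i = L_i, and the crossing relations. *)
Definition decorated_coloring (g : seg D -> 'M[C]_2) (L : seg D -> 'M[C]_2) :=
  (forall i, \det (g i) = 1) /\
  (forall i, \rank (L i) = 1%N) /\
  (forall i, (L i *m g i == L i)%MS) /\
  (forall x, pos x ->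
     [/\ g (out1 x) = g (in1 x),
         g (out2 x) = invmx (g (in1 x)) *m g (in2 x) *m g (in1 x),
         (L (out1 x) == L (in1 x))%MS &
         (L (out2 x) == L (in2 x) *m g (in1 x))%MS]) /\
  (forall x, ~~ pos x ->
     [/\ g (out2 x) = g (in2 x),
         g (out1 x) = g (in2 x) *m g (in1 x) *m invmx (g (in2 x)),
         (L (out2 x) == L (in2 x))%MS &
         (L (out1 x) == L (in1 x) *m invmx (g (in2 x)))%MS]).

Definition shadow_coloring (g : seg D -> 'M[C]_2) (u : reg D -> 'cV[C]_2) :=
  (forall j, u j != 0) /\ (forall i, u (down i) = g i *m u (up i)).

Definition line_vectors (g L : seg D -> 'M[C]_2) (v : seg D -> 'rV[C]_2)
    (m : seg D -> C) :=
  forall i, [/\ v i != 0, (v i <= L i)%MS & v i *m g i = (m i)^-1 *: v i].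

Definition admissible (u : reg D -> 'cV[C]_2) (v : seg D -> 'rV[C]_2) :=
  (forall j, det2 (u j) e2 != 0) /\
  (forall i, (v i *m e2) 0 0 != 0) /\
  (forall i, (v i *m u (up i)) 0 0 != 0).

Definition assoc_a (u : reg D -> 'cV[C]_2) (i : seg D) : C :=
  det2 (u (down i)) e2 / det2 (u (up i)) e2.
Definition assoc_b (u : reg D -> 'cV[C]_2) (v : seg D -> 'rV[C]_2) (i : seg D) : C :=
  - (v i *m e2) 0 0 / (v i *m u (up i)) 0 0.

Definition octahedral_coloring (a b m : seg D -> C) :=
  (forall i, [/\ a i != 0, b i != 0 & m i != 0]) /\
  (forall x, m (out1 x) = m (in1 x) /\ m (out2 x) = m (in2 x)) /\
  (forall x, pos x ->
     let a1 := a (in1 x) in let a2 := a (in2 x) in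
     let b1 := b (in1 x) in let b2 := b (in2 x) in
     let m1 := m (in1 x) in let m2 := m (in2 x) in
     let A := 1 - m1 * b1 / b2 * (1 - a1 / m1) * (1 - (m2 * a2)^-1) in
     [/\ a (out1 x) = a1 * A^-1,
         a (out2 x) = a2 * A,
         b (out1 x) = m2 * b2 / m1 * (1 - m2 * a2 * (1 - b2 / (m1 * b1)))^-1 &
         b (out2 x) = b1 * (1 - m1 / a1 * (1 - b2 / (m1 * b1)))]) /\
  (forall x, ~~ pos x ->
     let a1 := a (in1 x) in let a2 := a (in2 x) in
     let b1 := b (in1 x) in let b2 := b (in2 x) in
     let m1 := m (in1 x) in let m2 := m (in2 x) in
     let At := 1 - b2 / (m1 * b1) * (1 - m1 * a1) * (1 - m2 / a2) in
     [/\ a (out1 x) = a1 * At^-1,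
         a (out2 x) = a2 * At,
         b (out1 x) = m2 * b2 / m1 * (1 - a2 / m2 * (1 - m1 * b1 / b2)) &
         b (out2 x) = b1 * (1 - (m1 * a1)^-1 * (1 - m1 * b1 / b2))^-1]).

End Colorings.

From HB Require Import structures.
From mathcomp Require Import all_boot all_order all_algebra.
From mathcomp Require Import reals complex.
From mathcomp Require Import ring.
Set Implicit Arguments. Unset Strict Implicit.
Import Order.TTheory GRing.Theory Num.Theory.
Local Open Scope ring_scope.

(* Normalise every line vector so that its second coordinate is 1; this does
   not change b. If v = (s, 1) satisfies v g = m^-1 v with det g = 1, then
   g_00 = m + s g_01, i.e. in the coordinates w |-> (w_0, v w) the matrix g is
   upper triangular with diagonal (m, m^-1), and two such functionals v1, v2
   differ by (s2 - s1) w_0. The four regions around a crossing are t, g1 t,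
   g2 g1 t and g1^-1 g2 g1 t (resp. g2 t), so all a's and b's become rational
   functions of m1, m2, t_0, v1 t, (g1 t)_0, v2 g1 t and (g2 g1 t)_0, and the
   octahedral relations become rational identities. The m's are preserved
   because the outgoing line vectors are eigenvectors of the outgoing
   matrices, which are conjugates of the incoming ones. *)

Section OctahedralRelations.
Variable F : fieldType.

Definition octahedral_pos (m1 m2 a1 a2 b1 b2 a1' a2' b1' b2' : F) : Prop :=
  let A := 1 - m1 * b1 / b2 * (1 - a1 / m1) * (1 - (m2 * a2)^-1) in
  [/\ a1' = a1 * A^-1, a2' = a2 * A,
      b1' = m2 * b2 / m1 * (1 - m2 * a2 * (1 - b2 / (m1 * b1)))^-1 &
      b2' = b1 * (1 - m1 / a1 * (1 - b2 / (m1 * b1)))].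

Definition octahedral_neg (m1 m2 a1 a2 b1 b2 a1' a2' b1' b2' : F) : Prop :=
  let At := 1 - b2 / (m1 * b1) * (1 - m1 * a1) * (1 - m2 / a2) in
  [/\ a1' = a1 * At^-1, a2' = a2 * At,
      b1' = m2 * b2 / m1 * (1 - a2 / m2 * (1 - m1 * b1 / b2)) &
      b2' = b1 * (1 - (m1 * a1)^-1 * (1 - m1 * b1 / b2))^-1].

(* Coordinates at a crossing with regions t (top), l = g1 t (left), o = g2 l
   (bottom) and r (right): t0, l0, o0, r0 are first coordinates, p = v1 t,
   q = v2 l, po = v1 o, pt = v2 t, k_j = (g_j)_01 and d = (v2 - v1)_0, where
   the line vectors v_j are normalised by (v_j)_1 = 1. *)
Lemma octahedral_pos_coords (m1 m2 k1 d t0 p l0 q o0 po r0 : F) :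
    m1 != 0 -> m2 != 0 -> t0 != 0 -> p != 0 -> l0 != 0 -> q != 0 ->
    o0 != 0 -> po != 0 -> r0 != 0 ->
    l0 = m1 * t0 + k1 * p -> q = m1^-1 * p + d * l0 ->
    po = m2^-1 * q - d * o0 -> r0 = m1^-1 * o0 - k1 * po ->
  octahedral_pos m1 m2 (l0 / t0) (o0 / l0) (- p^-1) (- q^-1)
    (o0 / r0) (r0 / t0) (- (m1 * po)^-1) (- (m1^-1 + d * k1) / q).
Proof.
move=> m1n m2n t0n pn l0n qn o0n pon r0n hl0 hq hpo hr0.
have N1n : -1 != 0 :> F by rewrite oppr_eq0 oner_eq0.
have nz := (N1n, m1n, m2n, t0n, pn, l0n, qn, o0n, pon, r0n).
have k1E : k1 = (l0 - m1 * t0) / p by rewrite hl0; field; rewrite ?nz.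
have dE : d = (q - m1^-1 * p) / l0 by rewrite hq; field; rewrite ?nz.
have AE : 1 - m1 * - p^-1 / - q^-1 * (1 - l0 / t0 / m1) * (1 - (m2 * (o0 / l0))^-1)
          = r0 * l0 / (t0 * o0).
  by rewrite hr0 hpo k1E dE; field; rewrite ?nz.
have KE : 1 - m2 * (o0 / l0) * (1 - - q^-1 / (m1 * - p^-1)) = m2 * po / q.
  by rewrite hpo dE; field; rewrite ?nz.
rewrite /octahedral_pos AE KE; split; rewrite ?dE ?k1E; field; by rewrite ?nz.
Qed.

Lemma octahedral_neg_coords (m1 m2 k2 d t0 p l0 q o0 pt r0 : F) :
    m1 != 0 -> m2 != 0 -> t0 != 0 -> p != 0 -> l0 != 0 -> q != 0 ->
    o0 != 0 -> pt != 0 -> r0 != 0 ->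
    q = m1^-1 * p + d * l0 -> o0 = m2 * l0 + k2 * q ->
    pt = p + d * t0 -> r0 = m2 * t0 + k2 * pt ->
  octahedral_neg m1 m2 (l0 / t0) (o0 / l0) (- p^-1) (- q^-1)
    (o0 / r0) (r0 / t0) (- (m2 + d * k2) / p) (- pt^-1).
Proof.
move=> m1n m2n t0n pn l0n qn o0n ptn r0n hq ho0 hpt hr0.
have N1n : -1 != 0 :> F by rewrite oppr_eq0 oner_eq0.
have nz := (N1n, m1n, m2n, t0n, pn, l0n, qn, o0n, ptn, r0n).
have dE : d = (q - m1^-1 * p) / l0 by rewrite hq; field; rewrite ?nz.
have k2E : k2 = (o0 - m2 * l0) / q by rewrite ho0; field; rewrite ?nz.
have AE : 1 - - q^-1 / (m1 * - p^-1) * (1 - m1 * (l0 / t0)) * (1 - m2 / (o0 / l0))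
          = r0 * l0 / (t0 * o0).
  by rewrite hr0 hpt k2E dE; field; rewrite ?nz.
have KE : 1 - (m1 * (l0 / t0))^-1 * (1 - m1 * - p^-1 / - q^-1) = pt / p.
  by rewrite hpt dE; field; rewrite ?nz.
rewrite /octahedral_neg AE KE; split; rewrite ?dE ?k2E; field; by rewrite ?nz.
Qed.
End OctahedralRelations.

Section Eigenrows.
Variable F : fieldType.

Lemma eigenrow_inv_uniq n (w : 'rV[F]_n) (M : 'M[F]_n) (a b : F) :
  w != 0 -> w *m M = a^-1 *: w -> w *m M = b^-1 *: w -> a = b.
Proof.
move=> wn -> /eqP; rewrite -subr_eq0 -scalerBl scaler_eq0 (negbTE wn) orbF subr_eq0.
by move=> /eqP /invr_inj.
Qed.

Lemma eigenrowZ n (c a : F) (w : 'rV[F]_n) (M : 'M[F]_n) :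
  w *m M = a *: w -> (c *: w) *m M = a *: (c *: w).
Proof. by move=> wM; rewrite -scalemxAl wM !scalerA mulrC. Qed.

Lemma eigenrow_conj n (a : F) (w : 'rV[F]_n) (M H : 'M[F]_n) : H \in unitmx ->
  w *m M = a *: w -> (w *m H) *m (invmx H *m M *m H) = a *: (w *m H).
Proof. by move=> HU wM; rewrite !mulmxA mulmxK // wM scalemxAl. Qed.

Lemma rank1_colinear k n (L : 'M[F]_(k, n)) (w w' : 'rV[F]_n) :
  \rank L = 1%N -> w != 0 -> (w <= L)%MS -> w' != 0 -> (w' <= L)%MS ->
  exists2 c, c != 0 & w' = c *: w.
Proof.
move=> rL wn wL w'n w'L.
have /andP[_ Lw] : (w == L)%MS by rewrite -(mxrank_leqif_eq wL).2 rank_rV wn rL.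
have /sub_rVP[c w'E] := submx_trans w'L Lw.
by exists c => //; apply: contraNneq w'n => c0; rewrite w'E c0 scale0r.
Qed.

End Eigenrows.

Section TwoByTwo.
Variable F : fieldType.

Lemma mulmx2E m n (A : 'M[F]_(m, 2)) (B : 'M[F]_(2, n)) i j :
  (A *m B) i j = A i 0 * B 0 j + A i 1 * B 1 j.
Proof.
rewrite mxE !big_ord_recl big_ord0 addr0.
by have -> : lift ord0 ord0 = 1 :> 'I_2 by apply: val_inj.
Qed.

Lemma det_mx2 (M : 'M[F]_2) : \det M = M 0 0 * M 1 1 - M 0 1 * M 1 0.
Proof.
rewrite (expand_det_row _ 0) !big_ord_recl big_ord0 addr0 /cofactor !det_mx11 !mxE /=.
have -> : lift 0 0 = 1 :> 'I_2 by apply: val_inj.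
have -> : lift 1 0 = 0 :> 'I_2 by apply: val_inj.
have -> : ord0 = 0 :> 'I_2 by apply: val_inj.
by rewrite expr0 expr1 mul1r mulN1r mulrN.
Qed.

Lemma invmx_sl2 (M : 'M[F]_2) : \det M = 1 ->
  [/\ invmx M 0 0 = M 1 1, invmx M 0 1 = - M 0 1 & invmx M 1 1 = M 0 0].
Proof.
move=> detM; rewrite /invmx unitmxE detM unitr1 invr1 scale1r !mxE /cofactor.
rewrite !det_mx11 !mxE /=.
have -> : lift 0 0 = 1 :> 'I_2 by apply: val_inj.
have -> : lift 1 0 = 0 :> 'I_2 by apply: val_inj.
by rewrite expr0 expr1 mul1r !mulN1r expr2 mulN1r opprK mul1r.
Qed.

Lemma row_coord_shift (v v' : 'rV[F]_2) (w : 'cV[F]_2) : v' 0 1 = v 0 1 ->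
  (v' *m w) 0 0 = (v *m w) 0 0 + (v' 0 0 - v 0 0) * w 0 0.
Proof. by move=> v'1; rewrite !mulmx2E v'1; ring. Qed.

Section SL2Eigenrow.
Variables (g : 'M[F]_2) (v : 'rV[F]_2) (mu : F).
Hypotheses (mu_neq0 : mu != 0) (v1 : v 0 1 = 1) (vg : v *m g = mu^-1 *: v).

Lemma eigenrow_g11 : g 1 1 = mu^-1 - v 0 0 * g 0 1.
Proof.
have /= := congr1 (fun M : 'rV_2 => M 0 1) vg.
by rewrite mulmx2E mxE v1 mul1r mulr1 => <-; ring.
Qed.

Lemma eigenrow_g10 : g 1 0 = mu^-1 * v 0 0 - v 0 0 * g 0 0.
Proof.
have /= := congr1 (fun M : 'rV_2 => M 0 0) vg.
by rewrite mulmx2E mxE v1 mul1r => <-; ring.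
Qed.

Lemma eigenrow_mul (w : 'cV[F]_2) : (v *m (g *m w)) 0 0 = mu^-1 * (v *m w) 0 0.
Proof. by rewrite mulmxA vg -scalemxAl mxE. Qed.

Lemma eigenrow_coord1 (v' : 'rV[F]_2) : v' 0 1 = 1 ->
  (v' *m g) 0 1 = mu^-1 + (v' 0 0 - v 0 0) * g 0 1.
Proof. by move=> v'1; rewrite mulmx2E v'1 eigenrow_g11; ring. Qed.

Hypothesis det_g : \det g = 1.

Lemma sl2_eigenrow_g00 : g 0 0 = mu + g 0 1 * v 0 0.
Proof.
have : (g 0 0 - g 0 1 * v 0 0 - mu) / mu = \det g - 1.
  by rewrite det_mx2 eigenrow_g11 eigenrow_g10; field.
rewrite det_g subrr => /eqP.
by rewrite mulf_eq0 invr_eq0 (negbTE mu_neq0) orbF subr_eq0 subr_eq => /eqP.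
Qed.

Lemma sl2_eigenrow_coord (w : 'cV[F]_2) :
  (g *m w) 0 0 = mu * w 0 0 + g 0 1 * (v *m w) 0 0.
Proof. by rewrite !mulmx2E sl2_eigenrow_g00 v1; ring. Qed.

Lemma sl2_eigenrow_inv_coord (w : 'cV[F]_2) :
  (invmx g *m w) 0 0 = mu^-1 * w 0 0 - g 0 1 * (v *m w) 0 0.
Proof.
have [g00 g01 _] := invmx_sl2 det_g.
by rewrite !mulmx2E g00 g01 eigenrow_g11 v1; ring.
Qed.

Lemma sl2_eigenrow_inv_coord1 (v' : 'rV[F]_2) : v' 0 1 = 1 ->
  (v' *m invmx g) 0 1 = mu + (v 0 0 - v' 0 0) * g 0 1.
Proof.
have [_ g01 g11] := invmx_sl2 det_g.
by move=> v'1; rewrite mulmx2E g01 g11 v'1 sl2_eigenrow_g00; ring.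
Qed.

Lemma sl2_eigenrow_mul_inv (w : 'cV[F]_2) :
  (v *m (invmx g *m w)) 0 0 = mu * (v *m w) 0 0.
Proof.
have gU : g \in unitmx by rewrite unitmxE det_g unitr1.
have vgV : v *m invmx g = mu *: v.
  by rewrite -[v in RHS](mulmxK gU) vg -scalemxAl scalerA mulfV // scale1r.
by rewrite mulmxA vgV -scalemxAl mxE.
Qed.

End SL2Eigenrow.

Lemma scalemx_mul00 (c : F) (w : 'rV[F]_2) (y : 'cV[F]_2) :
  ((c *: w) *m y) 0 0 = c * (w *m y) 0 0.
Proof. by rewrite -scalemxAl mxE. Qed.

Definition b_coord (v : 'rV[F]_2) (w : 'cV[F]_2) : F := - v 0 1 / (v *m w) 0 0.

Definition normal_row (v : 'rV[F]_2) : 'rV[F]_2 := (v 0 1)^-1 *: v.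

Lemma b_coordZ (c : F) (v : 'rV[F]_2) (w : 'cV[F]_2) :
  c != 0 -> b_coord (c *: v) w = b_coord v w.
Proof.
move=> cn; rewrite /b_coord scalemx_mul00 [(c *: v) 0 1]mxE.
have [->|vwn] := eqVneq ((v *m w) 0 0) 0; first by rewrite !mulr0 !invr0 !mulr0.
by field; rewrite cn vwn.
Qed.

Lemma b_coord_normal (v : 'rV[F]_2) (w : 'cV[F]_2) :
  v 0 1 = 1 -> b_coord v w = - ((v *m w) 0 0)^-1.
Proof. by move=> v1; rewrite /b_coord v1 mulN1r. Qed.

Lemma normal_row1 (v : 'rV[F]_2) : v 0 1 != 0 -> normal_row v 0 1 = 1.
Proof. by move=> vn; rewrite mxE mulVf. Qed.

Lemma octahedral_pos_crossing (g1 g2 : 'M[F]_2) (v1 v2 : 'rV[F]_2) (m1 m2 : F)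
    (t l o r : 'cV[F]_2) :
    m1 != 0 -> \det g1 = 1 -> v1 0 1 = 1 -> v1 *m g1 = m1^-1 *: v1 ->
    m2 != 0 -> v2 0 1 = 1 -> v2 *m g2 = m2^-1 *: v2 ->
    l = g1 *m t -> o = g2 *m l -> r = invmx g1 *m o ->
    t 0 0 != 0 -> l 0 0 != 0 -> o 0 0 != 0 -> r 0 0 != 0 ->
    (v1 *m t) 0 0 != 0 -> (v2 *m l) 0 0 != 0 -> (v1 *m r) 0 0 != 0 ->
  octahedral_pos m1 m2 (l 0 0 / t 0 0) (o 0 0 / l 0 0) (b_coord v1 t) (b_coord v2 l)
    (o 0 0 / r 0 0) (r 0 0 / t 0 0) (b_coord v1 r) (b_coord (v2 *m g1) t).
Proof.
move=> m1n dg1 v11 v1g1 m2n v21 v2g2 hl ho hr t0n l0n o0n r0n pn qn prn.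
have hl0 : l 0 0 = m1 * t 0 0 + g1 0 1 * (v1 *m t) 0 0.
  by rewrite hl (sl2_eigenrow_coord m1n v11 v1g1).
have hq : (v2 *m l) 0 0 = m1^-1 * (v1 *m t) 0 0 + (v2 0 0 - v1 0 0) * l 0 0.
  by rewrite (row_coord_shift (v := v1)) ?v11 ?v21 // hl (eigenrow_mul v1g1).
have hpo : (v1 *m o) 0 0 = m2^-1 * (v2 *m l) 0 0 - (v2 0 0 - v1 0 0) * o 0 0.
  by rewrite (row_coord_shift (v := v2)) ?v11 ?v21 // ho (eigenrow_mul v2g2); ring.
have hr0 : r 0 0 = m1^-1 * o 0 0 - g1 0 1 * (v1 *m o) 0 0.
  by rewrite hr (sl2_eigenrow_inv_coord v11 v1g1).
have hpr : (v1 *m r) 0 0 = m1 * (v1 *m o) 0 0.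
  by rewrite hr (sl2_eigenrow_mul_inv m1n v1g1).
have pon : (v1 *m o) 0 0 != 0 by move: prn; rewrite hpr mulf_eq0 negb_or => /andP[].
have b2'E : b_coord (v2 *m g1) t =
    - (m1^-1 + (v2 0 0 - v1 0 0) * g1 0 1) / (v2 *m l) 0 0.
  by rewrite /b_coord (eigenrow_coord1 v11 v1g1) // -mulmxA -hl.
rewrite b2'E !b_coord_normal // hpr.
exact: octahedral_pos_coords hl0 hq hpo hr0.
Qed.

Lemma octahedral_neg_crossing (g1 g2 : 'M[F]_2) (v1 v2 : 'rV[F]_2) (m1 m2 : F)
    (t l o r : 'cV[F]_2) :
    m1 != 0 -> v1 0 1 = 1 -> v1 *m g1 = m1^-1 *: v1 ->
    m2 != 0 -> \det g2 = 1 -> v2 0 1 = 1 -> v2 *m g2 = m2^-1 *: v2 ->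
    l = g1 *m t -> o = g2 *m l -> r = g2 *m t ->
    t 0 0 != 0 -> l 0 0 != 0 -> o 0 0 != 0 -> r 0 0 != 0 ->
    (v1 *m t) 0 0 != 0 -> (v2 *m l) 0 0 != 0 -> (v2 *m t) 0 0 != 0 ->
  octahedral_neg m1 m2 (l 0 0 / t 0 0) (o 0 0 / l 0 0) (b_coord v1 t) (b_coord v2 l)
    (o 0 0 / r 0 0) (r 0 0 / t 0 0) (b_coord (v1 *m invmx g2) r) (b_coord v2 t).
Proof.
move=> m1n v11 v1g1 m2n dg2 v21 v2g2 hl ho hr t0n l0n o0n r0n pn qn ptn.
have g2U : g2 \in unitmx by rewrite unitmxE dg2 unitr1.
have hq : (v2 *m l) 0 0 = m1^-1 * (v1 *m t) 0 0 + (v2 0 0 - v1 0 0) * l 0 0.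
  by rewrite (row_coord_shift (v := v1)) ?v11 ?v21 // hl (eigenrow_mul v1g1).
have ho0 : o 0 0 = m2 * l 0 0 + g2 0 1 * (v2 *m l) 0 0.
  by rewrite ho (sl2_eigenrow_coord m2n v21 v2g2).
have hpt : (v2 *m t) 0 0 = (v1 *m t) 0 0 + (v2 0 0 - v1 0 0) * t 0 0.
  by rewrite (row_coord_shift (v := v1)) ?v11 ?v21.
have hr0 : r 0 0 = m2 * t 0 0 + g2 0 1 * (v2 *m t) 0 0.
  by rewrite hr (sl2_eigenrow_coord m2n v21 v2g2).
have b1'E : b_coord (v1 *m invmx g2) r =
    - (m2 + (v2 0 0 - v1 0 0) * g2 0 1) / (v1 *m t) 0 0.
  by rewrite /b_coord (sl2_eigenrow_inv_coord1 m2n v21 v2g2) // hr mulmxA mulmxKV.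
rewrite b1'E !b_coord_normal //.
exact: octahedral_neg_coords hq ho0 hpt hr0.
Qed.

End TwoByTwo.

Section Colorings.
Variables (R : realType) (D : tangle_diagram).
Variables (g L : seg D -> 'M[R[i]]_2) (u : reg D -> 'cV[R[i]]_2).
Variables (v : seg D -> 'rV[R[i]]_2) (m : seg D -> R[i]).
Hypotheses (dc : decorated_coloring g L) (sc : shadow_coloring g u).
Hypotheses (lv : line_vectors g L v m) (ad : admissible u v).

Lemma det2_e2 (w : 'cV[R[i]]_2) : det2 w (e2 R) = w 0 0.
Proof.
have s0 : split (0 : 'I_(1 + 1)) = inl 0.
  by rewrite -(unsplitK (inl 0)); congr split; apply: val_inj.
have s1 : split (1 : 'I_(1 + 1)) = inr 0.
  by rewrite -(unsplitK (inr 0)); congr split; apply: val_inj.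
by rewrite /det2 det_mx2 !mxE s0 s1 !mxE /= mulr1 mul0r subr0.
Qed.

Lemma mul_e2 (w : 'rV[R[i]]_2) : (w *m e2 R) 0 0 = w 0 1.
Proof. by rewrite mulmx2E !mxE /= mulr0 add0r mulr1. Qed.

Let det_g j : \det (g j) = 1 := dc.1 j.
Let g_unit j : g j \in unitmx. Proof. by rewrite unitmxE det_g unitr1. Qed.
Let u_down j : u (down j) = g j *m u (up j) := sc.2 j.
Let v_neq0 j : v j != 0. Proof. by case: (lv j). Qed.
Let v_sub_L j : (v j <= L j)%MS. Proof. by case: (lv j). Qed.
Let v_eigen j : v j *m g j = (m j)^-1 *: v j. Proof. by case: (lv j). Qed.
Let v_up_neq0 j : (v j *m u (up j)) 0 0 != 0 := ad.2.2 j.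

Lemma m_neq0 j : m j != 0.
Proof.
apply: contraNneq (v_neq0 j) => m0.
have /eqP := v_eigen j; rewrite m0 invr0 scale0r.
by rewrite mulmx_free_eq0 ?row_free_unit ?g_unit // => /eqP.
Qed.

Lemma v01_neq0 j : v j 0 1 != 0.
Proof. by rewrite -mul_e2; apply: ad.2.1. Qed.

Lemma u00_neq0 r : u r 0 0 != 0.
Proof. by rewrite -det2_e2; apply: ad.1. Qed.

Lemma assoc_aE j : assoc_a u j = u (down j) 0 0 / u (up j) 0 0.
Proof. by rewrite /assoc_a !det2_e2. Qed.

Lemma assoc_bE j : assoc_b u v j = b_coord (v j) (u (up j)).
Proof. by rewrite /assoc_b mul_e2. Qed.

Lemma assoc_a_neq0 j : assoc_a u j != 0.
Proof. by rewrite assoc_aE mulf_neq0 ?invr_eq0 ?u00_neq0. Qed.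

Lemma assoc_b_neq0 j : assoc_b u v j != 0.
Proof. by rewrite /assoc_b mulf_neq0 ?oppr_eq0 ?invr_eq0 ?mul_e2 ?v01_neq0. Qed.

Local Notation nv j := (normal_row (v j)).

Lemma nv1 j : nv j 0 1 = 1.
Proof. exact: normal_row1 (v01_neq0 j). Qed.

Lemma nv_neq0 j : nv j != 0.
Proof. by apply: contra_eq_neq (nv1 j) => ->; rewrite mxE eq_sym oner_neq0. Qed.

Lemma nv_eigen j : nv j *m g j = (m j)^-1 *: nv j.
Proof. exact: eigenrowZ (v_eigen j). Qed.

Lemma b_coord_nv j w : b_coord (v j) w = b_coord (nv j) w.
Proof. by rewrite b_coordZ ?invr_eq0 ?v01_neq0. Qed.

Lemma nv_mul_neq0 j (w : 'cV[R[i]]_2) : (v j *m w) 0 0 != 0 -> (nv j *m w) 0 0 != 0.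
Proof. by move=> vw; rewrite scalemx_mul00 mulf_neq0 ?invr_eq0 ?v01_neq0. Qed.

Lemma nv_up_neq0 j : (nv j *m u (up j)) 0 0 != 0.
Proof. exact: nv_mul_neq0 (v_up_neq0 j). Qed.

Lemma out_lines_pos x : pos x ->
  (exists2 c, c != 0 & v (out1 x) = c *: nv (in1 x)) /\
  (exists2 c, c != 0 & v (out2 x) = c *: (nv (in2 x) *m g (in1 x))).
Proof.
move=> hx; have [_ _ /andP[L1o _] /andP[L2o _]] := dc.2.2.2.1 x hx.
have rL2 : \rank (L (in2 x) *m g (in1 x)) = 1%N.
  by rewrite mxrankMfree ?row_free_unit ?g_unit // dc.2.1.
split; [apply: (rank1_colinear (dc.2.1 (in1 x))) | apply: (rank1_colinear rL2)].
- exact: nv_neq0.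
- by rewrite scalemx_sub.
- exact: v_neq0.
- exact: submx_trans (v_sub_L _) L1o.
- by rewrite mulmx_free_eq0 ?row_free_unit ?g_unit ?nv_neq0.
- by rewrite submxMr ?scalemx_sub.
- exact: v_neq0.
- exact: submx_trans (v_sub_L _) L2o.
Qed.

Lemma out_lines_neg x : ~~ pos x ->
  (exists2 c, c != 0 & v (out1 x) = c *: (nv (in1 x) *m invmx (g (in2 x)))) /\
  (exists2 c, c != 0 & v (out2 x) = c *: nv (in2 x)).
Proof.
move=> hx; have [_ _ /andP[L2o _] /andP[L1o _]] := dc.2.2.2.2 x hx.
have rL1 : \rank (L (in1 x) *m invmx (g (in2 x))) = 1%N.
  by rewrite mxrankMfree ?row_free_unit ?unitmx_inv ?g_unit // dc.2.1.
split; [apply: (rank1_colinear rL1) | apply: (rank1_colinear (dc.2.1 (in2 x)))].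
- by rewrite mulmx_free_eq0 ?row_free_unit ?unitmx_inv ?g_unit ?nv_neq0.
- by rewrite submxMr ?scalemx_sub.
- exact: v_neq0.
- exact: submx_trans (v_sub_L _) L1o.
- exact: nv_neq0.
- by rewrite scalemx_sub.
- exact: v_neq0.
- exact: submx_trans (v_sub_L _) L2o.
Qed.

Lemma m_out x : m (out1 x) = m (in1 x) /\ m (out2 x) = m (in2 x).
Proof.
have [hx | hx] := boolP (pos x).
  have [g1o g2o _ _] := dc.2.2.2.1 x hx.
  have [[c1 _ v1o] [c2 _ v2o]] := out_lines_pos hx.
  split; apply: eigenrow_inv_uniq (v_neq0 _) (v_eigen _) _.
  - by rewrite v1o g1o; apply/eigenrowZ/nv_eigen.
  - by rewrite v2o g2o; apply/eigenrowZ/(eigenrow_conj (g_unit _))/nv_eigen.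
have [g2o g1o _ _] := dc.2.2.2.2 x hx.
have [[c1 _ v1o] [c2 _ v2o]] := out_lines_neg hx.
have g1oE : g (out1 x) = invmx (invmx (g (in2 x))) *m g (in1 x) *m invmx (g (in2 x)).
  by rewrite invmxK.
split; apply: eigenrow_inv_uniq (v_neq0 _) (v_eigen _) _.
- rewrite v1o g1oE; apply/eigenrowZ/eigenrow_conj/nv_eigen.
  by rewrite unitmx_inv g_unit.
- by rewrite v2o g2o; apply/eigenrowZ/nv_eigen.
Qed.

Lemma octahedral_at_pos x : pos x ->
  octahedral_pos (m (in1 x)) (m (in2 x)) (assoc_a u (in1 x)) (assoc_a u (in2 x))
    (assoc_b u v (in1 x)) (assoc_b u v (in2 x)) (assoc_a u (out1 x))
    (assoc_a u (out2 x)) (assoc_b u v (out1 x)) (assoc_b u v (out2 x)).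
Proof.
move=> hx; have [g1o _ _ _] := dc.2.2.2.1 x hx.
have [[c1 c1n v1o] [c2 c2n v2o]] := out_lines_pos hx.
have hl : u (up (in2 x)) = g (in1 x) *m u (up (in1 x)) by rewrite -reg_left u_down.
have hr : u (up (out1 x)) = invmx (g (in1 x)) *m u (down (in2 x)).
  by rewrite reg_bottom u_down g1o (mulKmx (g_unit _)).
have prn : (nv (in1 x) *m u (up (out1 x))) 0 0 != 0.
  by have := v_up_neq0 (out1 x); rewrite v1o scalemx_mul00 mulf_eq0 negb_or => /andP[].
rewrite !assoc_aE !assoc_bE v1o v2o (b_coordZ _ _ c1n) (b_coordZ _ _ c2n) !b_coord_nv.
rewrite (reg_left x) -(reg_bottom x) -(reg_right x) -(reg_top x).
exact: (octahedral_pos_crossing (m_neq0 _) (det_g _) (nv1 _) (nv_eigen _)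
  (m_neq0 _) (nv1 _) (nv_eigen _) hl (u_down _) hr (u00_neq0 _) (u00_neq0 _)
  (u00_neq0 _) (u00_neq0 _) (nv_up_neq0 _) (nv_up_neq0 _) prn).
Qed.

Lemma octahedral_at_neg x : ~~ pos x ->
  octahedral_neg (m (in1 x)) (m (in2 x)) (assoc_a u (in1 x)) (assoc_a u (in2 x))
    (assoc_b u v (in1 x)) (assoc_b u v (in2 x)) (assoc_a u (out1 x))
    (assoc_a u (out2 x)) (assoc_b u v (out1 x)) (assoc_b u v (out2 x)).
Proof.
move=> hx; have [g2o _ _ _] := dc.2.2.2.2 x hx.
have [[c1 c1n v1o] [c2 c2n v2o]] := out_lines_neg hx.
have hl : u (up (in2 x)) = g (in1 x) *m u (up (in1 x)) by rewrite -reg_left u_down.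
have hr : u (up (out1 x)) = g (in2 x) *m u (up (in1 x)).
  by rewrite reg_right u_down g2o -reg_top.
have ptn : (nv (in2 x) *m u (up (in1 x))) 0 0 != 0.
  have := v_up_neq0 (out2 x).
  by rewrite v2o scalemx_mul00 -(reg_top x) mulf_eq0 negb_or => /andP[].
rewrite !assoc_aE !assoc_bE v1o v2o (b_coordZ _ _ c1n) (b_coordZ _ _ c2n) !b_coord_nv.
rewrite (reg_left x) -(reg_bottom x) -(reg_right x) -(reg_top x).
exact: (octahedral_neg_crossing (m_neq0 _) (nv1 _) (nv_eigen _)
  (m_neq0 _) (det_g _) (nv1 _) (nv_eigen _) hl (u_down _) hr (u00_neq0 _) (u00_neq0 _)
  (u00_neq0 _) (u00_neq0 _) (nv_up_neq0 _) (nv_up_neq0 _) ptn).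
Qed.

End Colorings.

Theorem theorem2p11 (R : realType) (D : tangle_diagram)
  (g L : seg D -> 'M[R[i]]_2) (u : reg D -> 'cV[R[i]]_2)
  (v : seg D -> 'rV[R[i]]_2) (m : seg D -> R[i]) :
  decorated_coloring g L ->
  shadow_coloring g u ->
  line_vectors g L v m ->
  admissible u v ->
  octahedral_coloring (assoc_a u) (assoc_b u v) m.
Proof.
move=> dc sc lv ad; split; [|split; [|split]].
- move=> j; split.
  + exact: (assoc_a_neq0 ad).
  + exact: (assoc_b_neq0 ad).
  + exact: (m_neq0 dc lv).
- exact: m_out dc lv ad.
- exact: octahedral_at_pos dc sc lv ad.
- exact: octahedral_at_neg dc sc lv ad.
Qed.
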